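(* Let $\mathcal M=(M,<,+,0,\ldots)$ be a definably complete locally o-minimal expansion of an ordered group. Let $(G,\tau)$ be a definable topological group which is definably simple, and which, as a definable topological space, is regular, Hausdorff and definably compact. Then $(G,\tau)$ is either discrete or definably connected in the topology $\tau$.
   Context: ''Definable'' means definable in $\mathcal M$ with parameters. $\mathcal M$ is an expansion of an ordered group $(M,<,+,0)$ whose order is dense without endpoints. It is locally o-minimal if for every definable $X\subseteq M$ and every $a\in M$ there is an open interval $I\ni a$ such that $X\cap I$ is a finite union of points and open intervals; it is definably complete if every definable subset of $M$ has a supremum and an infimum in $M\cup\{\pm\infty\}$. A family $\{S_t: t\in T\}$ of sets is definable if $T$ and $\bigcup_{t\in T}\{t\}\times S_t$ are definable. A definable topological space is a definable set $X$ with a topology admitting a definable family of sets as an open base. A family $\mathcal F$ of sets is filtered if for $B_1,B_2\in\mathcal F$ there is $B_3\in\mathcal F$ with $B_3\subseteq B_1\cap B_2$. A definable topological space is definably compact if every definable filtered family of nonempty closed subsets has nonempty intersection. A definable group is a group whose underlying set and multiplication are definable; a definable topological group is a definable group with a definable topology in which multiplication and inversion are continuous. It is definably simple if it has no nontrivial definable normal subgroup. A definable set is definably connected (in a definable topology) if it has no definable subset, other than the empty set and itself, that is both open and closed. *)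

From mathcomp Require Import all_boot.
From Stdlib Require List.

Set Implicit Arguments.
Unset Strict Implicit.
Unset Printing Implicit Defensive.

(* Points of M^n are functions 'I_n -> M. *)
Section Tuples.
Variable M : Type.
Definition tcat m n (x : 'I_m -> M) (y : 'I_n -> M) : 'I_(m + n) -> M :=
  fun i => match split i with inl j => x j | inr k => y k end.
Definition lpart m n (z : 'I_(m + n) -> M) : 'I_m -> M := fun i => z (lshift n i).
Definition rpart m n (z : 'I_(m + n) -> M) : 'I_n -> M := fun i => z (rshift m i).
Definition tsingle (a : M) : 'I_1 -> M := fun _ => a.
End Tuples.

(* The "..." is encoded by the collection [Def n] of the
   subsets of M^n that are definable (with parameters), axiomatized as a
   structure in the sense of van den Dries (Tame topology, Ch. 1, §2):
   boolean algebras, closed under products with M, containing diagonals,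
   closed under projection, containing the graphs of < and +, and the
   singletons (parameters). *)
Record expansion := Expansion {
  car :> Type;
  lt : car -> car -> Prop;
  add : car -> car -> car;
  opp : car -> car;
  zero : car;
  addA : forall x y z, add x (add y z) = add (add x y) z;
  add0r : forall x, add zero x = x;
  addr0 : forall x, add x zero = x;
  addNr : forall x, add (opp x) x = zero;
  addrN : forall x, add x (opp x) = zero;
  lt_irrefl : forall x, ~ lt x x;
  lt_trans : forall x y z, lt x y -> lt y z -> lt x z;
  lt_total : forall x y, lt x y \/ x = y \/ lt y x;
  lt_addl : forall x y z, lt x y -> lt (add z x) (add z y);
  lt_addr : forall x y z, lt x y -> lt (add x z) (add y z);
  lt_dense : forall x y, lt x y -> exists z, lt x z /\ lt z y;
  no_max : forall x, exists y, lt x y;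
  no_min : forall x, exists y, lt y x;
  Def : forall n : nat, (('I_n -> car) -> Prop) -> Prop;
  Def_compl : forall n A, Def A -> Def (fun x : 'I_n -> car => ~ A x);
  Def_union : forall n A B, Def A -> Def B ->
     Def (fun x : 'I_n -> car => A x \/ B x);
  Def_prodr : forall n A, Def A ->
     Def (fun z : 'I_(n + 1) -> car => A (lpart z));
  Def_prodl : forall n A, Def A ->
     Def (fun z : 'I_(1 + n) -> car => A (rpart z));
  Def_diag : forall n (i j : 'I_n), Def (fun x : 'I_n -> car => x i = x j);
  Def_proj : forall n (A : ('I_(n + 1) -> car) -> Prop), Def A ->
     Def (fun x : 'I_n -> car => exists y, A (tcat x (tsingle y)));
  Def_lt : Def (fun x : 'I_2 -> car => lt (x ord0) (x ord_max));
  Def_add : Def (fun x : 'I_3 -> car =>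
     add (x ord0) (x (inord 1)) = x ord_max);
  Def_point : forall a : car, Def (fun x : 'I_1 -> car => x ord0 = a)
}.

Section Notions.
Variable M : expansion.
Local Notation pt n := ('I_n -> car M).

Definition Def1 (X : M -> Prop) := Def (fun x : pt 1 => X (x ord0)).

Definition finite_union_points_intervals (X : M -> Prop) (I : M -> Prop) :=
  exists (ps : list M) (ivs : list (M * M)),
    forall x, I x ->
      (X x <-> (List.In x ps \/ exists bc, List.In bc ivs /\ lt bc.1 x /\ lt x bc.2)).

Definition locally_o_minimal :=
  forall X : M -> Prop, Def1 X -> forall a : M,
    exists b c, lt b a /\ lt a c /\
      finite_union_points_intervals X (fun x => lt b x /\ lt x c).

(* definable completeness: sup and inf exist in M \cup {-oo,+oo} *)
Definition is_lub (X : M -> Prop) (s : M) :=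
  (forall x, X x -> ~ lt s x) /\ (forall b, (forall x, X x -> ~ lt b x) -> ~ lt b s).
Definition is_glb (X : M -> Prop) (s : M) :=
  (forall x, X x -> ~ lt x s) /\ (forall b, (forall x, X x -> ~ lt x b) -> ~ lt s b).
Definition has_sup_ext (X : M -> Prop) :=
  (exists s, is_lub X s) \/ (forall b, exists x, X x /\ lt b x) \/ (forall x, ~ X x).
Definition has_inf_ext (X : M -> Prop) :=
  (exists s, is_glb X s) \/ (forall b, exists x, X x /\ lt x b) \/ (forall x, ~ X x).
Definition definably_complete :=
  forall X : M -> Prop, Def1 X -> has_sup_ext X /\ has_inf_ext X.

Definition def_family m n (T : pt m -> Prop) (S : pt m -> pt n -> Prop) :=
  Def T /\ Def (fun z : pt (m + n) => T (lpart z) /\ S (lpart z) (rpart z)).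

(* Topology on X ⊆ M^n generated by a family of basic open sets B_t (t in T). *)
Section Top.
Variables (n m : nat) (X : pt n -> Prop) (T : pt m -> Prop) (B : pt m -> pt n -> Prop).

Definition is_open_base :=
  (forall t x, T t -> B t x -> X x) /\
  (forall x, X x -> exists t, T t /\ B t x) /\
  (forall s t x, T s -> T t -> B s x -> B t x ->
     exists u, T u /\ B u x /\ forall y, B u y -> B s y /\ B t y).

Definition topen (U : pt n -> Prop) :=
  (forall x, U x -> X x) /\
  forall x, U x -> exists t, T t /\ B t x /\ forall y, B t y -> U y.

Definition tclosed (C : pt n -> Prop) :=
  (forall x, C x -> X x) /\ topen (fun x => X x /\ ~ C x).

Definition def_top_space := Def X /\ def_family T B /\ is_open_base.

Definition hausdorff :=
  forall x y, X x -> X y -> x <> y ->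
    exists U V, topen U /\ topen V /\ U x /\ V y /\ forall z, ~ (U z /\ V z).

Definition regular :=
  forall x C, X x -> tclosed C -> ~ C x ->
    exists U V, topen U /\ topen V /\ U x /\ (forall z, C z -> V z) /\
      forall z, ~ (U z /\ V z).

Definition definably_compact :=
  forall k (I : pt k -> Prop) (F : pt k -> pt n -> Prop),
    def_family I F ->
    (forall i, I i -> tclosed (F i)) ->
    (forall i, I i -> exists x, F i x) ->
    (forall i j, I i -> I j -> exists l, I l /\ forall x, F l x -> F i x /\ F j x) ->
    exists x, forall i, I i -> F i x.

Definition discrete := forall x, X x -> topen (fun y => y = x).

Definition definably_connected :=
  forall Y : pt n -> Prop, Def Y -> (forall x, Y x -> X x) -> topen Y -> tclosed Y ->
    (forall x, ~ Y x) \/ (forall x, X x -> Y x).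
End Top.

Section Group.
Variables (n : nat) (G : pt n -> Prop) (mul : pt n -> pt n -> pt n)
  (e : pt n) (inv : pt n -> pt n).

Definition is_group :=
  G e /\ (forall x y, G x -> G y -> G (mul x y)) /\ (forall x, G x -> G (inv x)) /\
  (forall x y z, G x -> G y -> G z -> mul x (mul y z) = mul (mul x y) z) /\
  (forall x, G x -> mul e x = x /\ mul x e = x) /\
  (forall x, G x -> mul (inv x) x = e /\ mul x (inv x) = e).

Definition def_group :=
  is_group /\ Def G /\
  Def (fun w : pt (n + n + n) =>
         G (lpart (lpart w)) /\ G (rpart (lpart w)) /\
         rpart w = mul (lpart (lpart w)) (rpart (lpart w))).

Definition normal_subgroup (H : pt n -> Prop) :=
  (forall x, H x -> G x) /\ H e /\
  (forall x y, H x -> H y -> H (mul x y)) /\ (forall x, H x -> H (inv x)) /\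
  (forall g x, G g -> H x -> H (mul (mul g x) (inv g))).

Definition definably_simple :=
  forall H, Def H -> normal_subgroup H ->
    (forall x, H x -> x = e) \/ (forall x, G x -> H x).

Definition def_top_group m (T : pt m -> Prop) (B : pt m -> pt n -> Prop) :=
  def_group /\ def_top_space G T B /\
  (forall x y W, G x -> G y -> topen G T B W -> W (mul x y) ->
     exists U V, topen G T B U /\ topen G T B V /\ U x /\ V y /\
       forall u v, U u -> V v -> W (mul u v)) /\
  (forall x W, G x -> topen G T B W -> W (inv x) ->
     exists U, topen G T B U /\ U x /\ forall u, U u -> W (inv u)).
End Group.
End Notions.

(* If G is not definably connected, take a definable clopen set Y that is
   neither empty nor all of G.  The set of x with Y(ab) <-> Y(axb) for all a, b
   is a definable normal subgroup, and it is proper since Y is a nonempty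
   proper subset, so by definable simplicity it is trivial.  On the other hand,
   as Y is clopen and multiplication is continuous, points x near e satisfy
   Y(y) <-> Y(xy) for y near any given point; a definable tube lemma, obtained
   from definable compactness, makes this uniform in y.  Applying the same
   argument to the conjugates a x a^-1 shows that this subgroup contains a
   neighbourhood of e, so {e} is open and G is discrete. *)

From mathcomp Require Import all_boot zify.
From Stdlib Require Import FunctionalExtensionality PropExtensionality Classical.

Set Implicit Arguments.
Unset Strict Implicit.
Unset Printing Implicit Defensive.

Section Definability.
Variable M : expansion.
Local Notation pt n := ('I_n -> car M).

Lemma Def_ext n (A B : pt n -> Prop) : Def A -> (forall x, A x <-> B x) -> Def B.
Proof.
move=> hA hAB; suff -> : B = A by [].
apply: functional_extensionality => x; apply: propositional_extensionality.
by split=> /hAB.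
Qed.

Lemma Def_and n (A B : pt n -> Prop) : Def A -> Def B -> Def (fun x => A x /\ B x).
Proof.
move=> hA hB; apply: (Def_ext (Def_compl (Def_union (Def_compl hA) (Def_compl hB)))).
by move=> x; case: (classic (A x)); case: (classic (B x)); tauto.
Qed.

Lemma Def_impl n (A B : pt n -> Prop) : Def A -> Def B -> Def (fun x => A x -> B x).
Proof.
move=> hA hB; apply: (Def_ext (Def_union (Def_compl hA) hB)) => x.
by case: (classic (A x)); tauto.
Qed.

Lemma Def_iff n (A B : pt n -> Prop) : Def A -> Def B -> Def (fun x => A x <-> B x).
Proof. by move=> hA hB; apply: (Def_ext (Def_and (Def_impl hA hB) (Def_impl hB hA))). Qed.

Lemma app_val_eq n (x : pt n) (i j : 'I_n) : val i = val j -> x i = x j.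
Proof. by move=> /val_inj ->. Qed.

Lemma Def_cast n n' (h : n = n') (A : pt n -> Prop) :
  Def A -> Def (fun x : pt n' => A (fun i => x (cast_ord h i))).
Proof.
case: n' / h => hA; apply: (Def_ext hA) => x.
by rewrite (functional_extensionality _ x (fun i => congr1 x (cast_ord_id _ i))).
Qed.

Lemma Def_rpart j k (A : pt k -> Prop) : Def A -> Def (fun z : pt (j + k) => A (rpart z)).
Proof.
move=> hA; elim: j => [|j IH].
  apply: (Def_ext hA) => z.
  suff -> : @rpart _ 0 k z = z by [].
  by apply: functional_extensionality => i; exact: (app_val_eq z).
have h : 1 + (j + k) = j.+1 + k by rewrite addnA.
apply: (Def_ext (Def_cast h (Def_prodl IH))) => z.
suff -> : rpart (rpart (fun i => z (cast_ord h i))) = rpart z by [].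
by apply: functional_extensionality => i; apply: (app_val_eq z) => /=; lia.
Qed.

Lemma Def_true n : Def (fun _ : pt n => True).
Proof.
have i : 'I_(n + 1) := rshift n ord0.
apply: (Def_ext (Def_proj (Def_diag M i i))) => x.
by split=> // _; exists (zero M).
Qed.

Lemma Def_bigand n k (P : 'I_k -> pt n -> Prop) :
  (forall i, Def (P i)) -> Def (fun x => forall i, P i x).
Proof.
move=> hP; suff hs : forall s : seq 'I_k, Def (fun x => forall i, i \in s -> P i x).
  by apply: (Def_ext (hs (enum 'I_k))) => x; split=> h i; [apply: h; rewrite mem_enum | ].
elim=> [|j s IH]; first by apply: (Def_ext (Def_true n)).
apply: (Def_ext (Def_and (hP j) IH)) => x; split.
  by case=> hj hs i; rewrite in_cons => /predU1P [->|/hs].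
by move=> h; split=> [|i hi]; apply: h; rewrite in_cons ?eqxx ?hi ?orbT.
Qed.

Definition snoc k (y : pt k) (a : M) : pt k.+1 :=
  fun i => tcat y (tsingle a) (cast_ord (esym (addn1 k)) i).

Lemma parts_cast_tcat n k (u : pt (n + k)) a (h : n + k.+1 = n + k + 1) :
  let v := fun i => tcat u (tsingle a) (cast_ord h i) in
  lpart v = lpart u /\ rpart v = snoc (rpart u) a.
Proof.
split; apply: functional_extensionality => i; rewrite /lpart /rpart /snoc /tcat.
  case: splitP => [j /= hj|j /= hj]; first by apply: (app_val_eq u) => /=; lia.
  by have := ltn_ord i; lia.
case: splitP => [j /= hj|j /= hj]; case: splitP => [j' /= hj'|j' /= hj'] //.
- by apply: (app_val_eq u) => /=; lia.
- by have := ltn_ord j; have := ltn_ord j'; lia.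
- by have := ltn_ord j; have := ltn_ord j'; have := ltn_ord i; lia.
Qed.

Lemma snoc_surj k (x : pt k.+1) : x = snoc (fun j => x (widen_ord (leqnSn k) j)) (x ord_max).
Proof.
apply: functional_extensionality => i; rewrite /snoc /tcat.
by case: splitP => j /= hj; apply: (app_val_eq x) => /=; have := ltn_ord i; have := ltn_ord j; lia.
Qed.

Lemma Def_ex n k (P : pt n -> pt k -> Prop) :
  Def (fun v : pt (n + k) => P (lpart v) (rpart v)) -> Def (fun z => exists x, P z x).
Proof.
elim: k n P => [|k IH] n P hP.
  have h : n + 0 = n by rewrite addn0.
  apply: (Def_ext (Def_cast h hP)) => z.
  have -> : lpart (fun i => z (cast_ord h i)) = z.
    by apply: functional_extensionality => i; apply: (app_val_eq z).
  split=> [|[x]]; first by exists (rpart (fun i => z (cast_ord h i))).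
  by congr P; apply: functional_extensionality => -[].
have h : n + k.+1 = n + k + 1 by rewrite addn1 addnS.
have hsnoc : Def (fun u : pt (n + k) => exists a, P (lpart u) (snoc (rpart u) a)).
  apply: (Def_ext (Def_proj (Def_cast h hP))) => u.
  by split=> -[a ha]; exists a; move: ha; have [-> ->] := parts_cast_tcat u a h.
apply: (Def_ext (IH n (fun z y => exists a, P z (snoc y a)) hsnoc)) => z.
split=> [[y [a ha]]|[x hx]]; first by exists (snoc y a).
by exists (fun j => x (widen_ord (leqnSn k) j)), (x ord_max); rewrite -snoc_surj.
Qed.

Lemma Def_all n k (P : pt n -> pt k -> Prop) :
  Def (fun v : pt (n + k) => P (lpart v) (rpart v)) -> Def (fun z => forall x, P z x).
Proof.
move=> hP; apply: (Def_ext (Def_compl (Def_ex (P := fun z x => ~ P z x) (Def_compl hP)))) => z.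
split=> [hn x|hx [x]]; last exact.
by apply: NNPP => hx; apply: hn; exists x.
Qed.

Lemma Def_reindex n k (f : 'I_k -> 'I_n) (A : pt k -> Prop) :
  Def A -> Def (fun z : pt n => A (fun i => z (f i))).
Proof.
move=> hA.
have : Def (fun z : pt n => exists y, A y /\ forall i, y i = z (f i)).
  apply: (Def_ex (P := fun z y => A y /\ forall i, y i = z (f i))).
  by apply: Def_and; [exact: Def_rpart | apply: Def_bigand => i; apply: Def_diag].
move/Def_ext; apply=> z; split=> [[y [hy /functional_extensionality <-]] //|hz].
by exists (fun i => z (f i)).
Qed.

Lemma comp_tcat n a b (v : pt n) (f : 'I_a -> 'I_n) (g : 'I_b -> 'I_n) :
  (fun i => v (tcat f g i)) = tcat (fun i => v (f i)) (fun i => v (g i)).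
Proof. by apply: functional_extensionality => i; rewrite /tcat; case: split. Qed.

Lemma tcatKl a b X (x : 'I_a -> X) (y : 'I_b -> X) : lpart (tcat x y) = x.
Proof.
apply: functional_extensionality => i.
by rewrite /lpart /tcat (unsplitK (inl i : 'I_a + 'I_b)).
Qed.

Lemma tcatKr a b X (x : 'I_a -> X) (y : 'I_b -> X) : rpart (tcat x y) = y.
Proof.
apply: functional_extensionality => i.
by rewrite /rpart /tcat (unsplitK (inr i : 'I_a + 'I_b)).
Qed.

Lemma Def_reindex2 n a b (P : pt a -> pt b -> Prop) (f : 'I_a -> 'I_n) (g : 'I_b -> 'I_n) :
  Def (fun w : pt (a + b) => P (lpart w) (rpart w)) ->
  Def (fun v : pt n => P (fun i => v (f i)) (fun i => v (g i))).
Proof.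
move=> hP; apply: (Def_ext (Def_reindex (tcat f g) hP)) => v.
by rewrite comp_tcat tcatKl tcatKr.
Qed.

Lemma Def_reindex3 n a b c (P : pt a -> pt b -> pt c -> Prop)
  (f : 'I_a -> 'I_n) (g : 'I_b -> 'I_n) (h : 'I_c -> 'I_n) :
  Def (fun w : pt (a + b + c) => P (lpart (lpart w)) (rpart (lpart w)) (rpart w)) ->
  Def (fun v : pt n => P (fun i => v (f i)) (fun i => v (g i)) (fun i => v (h i))).
Proof.
move=> hP; apply: (Def_ext (Def_reindex (tcat (tcat f g) h) hP)) => v.
by rewrite comp_tcat tcatKl tcatKr comp_tcat tcatKl tcatKr.
Qed.

Lemma Def_eq_point n (c : pt n) : Def (fun x : pt n => x = c).
Proof.
have : Def (fun x : pt n => forall i, x i = c i).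
  by apply: Def_bigand => i; apply: (Def_reindex (fun _ : 'I_1 => i) (Def_point (c i))).
by move/Def_ext; apply=> x; split=> [/functional_extensionality|->].
Qed.

End Definability.

Section Topology.
Variables (M : expansion) (n m : nat).
Local Notation pt n := ('I_n -> car M).
Variables (X : pt n -> Prop) (T : pt m -> Prop) (B : pt m -> pt n -> Prop).

Lemma not_definably_connected : ~ definably_connected X T B ->
  exists Y, Def Y /\ topen X T B Y /\ tclosed X T B Y /\ (exists y, Y y) /\
    exists z, X z /\ ~ Y z.
Proof.
move=> hnc; apply: NNPP => hno; apply: hnc => Y hY sY oY cY.
case: (classic (exists y, Y y)) => [hy|hy]; last by left=> x Yx; apply: hy; exists x.
right=> x Xx; apply: NNPP => nYx; apply: hno; exists Y.
by do 4 (split=> //); exists x.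
Qed.

Hypothesis hbase : is_open_base X T B.

Lemma topen_basic t : T t -> topen X T B (B t).
Proof.
move=> Tt; split=> [x|x Btx]; first exact: (proj1 hbase t).
have [u [Tu [Bux hu]]] := proj2 (proj2 hbase) t t x Tt Tt Btx Btx.
by exists u; split=> //; split=> // y /hu [].
Qed.

Lemma topen_and U V : topen X T B U -> topen X T B V -> topen X T B (fun x => U x /\ V x).
Proof.
move=> [sU oU] [sV oV]; split=> [x [/sU]//|x [Ux Vx]].
have [s [Ts [Bsx hs]]] := oU x Ux; have [t [Tt [Btx ht]]] := oV x Vx.
have [u [Tu [Bux hu]]] := proj2 (proj2 hbase) s t x Ts Tt Bsx Btx.
by exists u; split=> //; split=> // y /hu [/hs ? /ht ?].
Qed.

Definition tclosure (C : pt n -> Prop) y :=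
  X y /\ forall s, T s -> B s y -> exists w, B s w /\ C w.

Lemma tclosure_closed C : tclosed X T B (tclosure C).
Proof.
split=> [x []//|]; split=> [x []//|x [Xx nCx]].
have [s [Ts [Bsx hs]]] : exists s, T s /\ B s x /\ ~ exists w, B s w /\ C w.
  apply: NNPP => h; apply: nCx; split=> // s Ts Bsx.
  by apply: NNPP => hw; apply: h; exists s.
exists s; split=> //; split=> // y Bsy; split; first exact: (proj1 hbase s y).
by case=> _ /(_ s Ts Bsy).
Qed.

Lemma tclosure_sub C : (forall x, C x -> X x) -> forall x, C x -> tclosure C x.
Proof. by move=> sC x Cx; split=> [|s _ Bsx]; [exact: sC | exists x]. Qed.

Lemma tclosureS (C D : pt n -> Prop) :
  (forall x, C x -> D x) -> forall x, tclosure C x -> tclosure D x.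
Proof.
move=> sCD x [Xx hx]; split=> // s Ts Bsx.
by have [w [Bsw /sCD Dw]] := hx s Ts Bsx; exists w.
Qed.

Hypotheses (hX : Def X)
  (hTB : Def (fun z : pt (m + n) => T (lpart z) /\ B (lpart z) (rpart z))).

Lemma Def_basic_at N (f : 'I_m -> 'I_N) (g : 'I_n -> 'I_N) :
  Def (fun v : pt N => T (fun i => v (f i)) /\ B (fun i => v (f i)) (fun i => v (g i))).
Proof. exact: (Def_reindex2 (P := fun s y => T s /\ B s y) _ _ hTB). Qed.

Lemma Def_tclosure k (C : pt k -> pt n -> Prop) :
  Def (fun z : pt (k + n) => C (lpart z) (rpart z)) ->
  Def (fun z : pt (k + n) => tclosure (C (lpart z)) (rpart z)).
Proof.
move=> hC.
have : Def (fun z : pt (k + n) => X (rpart z) /\ forall s, T s /\ B s (rpart z) ->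
    exists w, (T s /\ B s w) /\ C (lpart z) w).
  apply: Def_and; first exact: (Def_reindex _ hX).
  apply: Def_all => /=; apply: Def_impl; first exact: Def_basic_at.
  apply: Def_ex => /=; apply: Def_and; first exact: Def_basic_at.
  exact: (Def_reindex2 _ _ hC).
move/Def_ext; apply=> z; split=> -[Xz hz]; split=> // s.
  by move=> Ts Bsz; have [w [[_ ?] ?]] := hz s (conj Ts Bsz); exists w.
by case=> Ts Bsz; have [w [? ?]] := hz s Ts Bsz; exists w.
Qed.

Lemma Def_basic_nbhds x0 : Def (fun t => T t /\ B t x0).
Proof.
have : Def (fun t : pt m => exists y, (T t /\ B t y) /\ y = x0).
  by apply: Def_ex; apply: Def_and; [exact: hTB | exact: (Def_reindex _ (Def_eq_point x0))].
by move/Def_ext; apply=> t; split=> [[y [hy <-]]|?] //; exists x0.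
Qed.

Hypothesis hcpt : definably_compact X T B.

Lemma tube_lemma x0 (phi : pt n -> pt n -> Prop) : X x0 ->
  Def (fun w : pt (n + n) => phi (lpart w) (rpart w)) ->
  (forall y, X y -> exists U V, topen X T B U /\ topen X T B V /\ U x0 /\ V y /\
     forall x y', U x -> V y' -> phi x y') ->
  exists t, T t /\ B t x0 /\ forall x y, B t x -> X y -> phi x y.
Proof.
(* Otherwise, for every basic neighbourhood [B t] of [x0], the closure of the
   set of y such that [phi x y] fails for some x in [B t] is nonempty; these
   closures form a definable filtered family of closed sets, and the local
   hypothesis at a common point gives a contradiction. *)
move=> Xx0 hphi hloc; apply: NNPP => hno.
pose bad t y := X y /\ exists x, (T t /\ B t x) /\ ~ phi x y.
have hfam : def_family (fun t => T t /\ B t x0) (fun t => tclosure (bad t)).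
  split; first exact: Def_basic_nbhds.
  apply: Def_and; first exact: (Def_reindex _ (Def_basic_nbhds x0)).
  apply: Def_tclosure; apply: Def_and; first exact: (Def_reindex _ hX).
  apply: Def_ex => /=; apply: Def_and; first exact: Def_basic_at.
  by apply: Def_compl; exact: (Def_reindex2 _ _ hphi).
have hne t : T t /\ B t x0 -> exists y, tclosure (bad t) y.
  move=> [Tt Btx0]; have [x [y [Btx [Xy nphi]]]] : exists x y, B t x /\ X y /\ ~ phi x y.
    apply: NNPP => h; apply: hno; exists t; split=> //; split=> // x y Btx Xy.
    by apply: NNPP => nphi; apply: h; exists x, y.
  by exists y; apply: tclosure_sub => [w []|] //; split=> //; exists x.
have hfilt i j : T i /\ B i x0 -> T j /\ B j x0 -> exists u, (T u /\ B u x0) /\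
    forall y, tclosure (bad u) y -> tclosure (bad i) y /\ tclosure (bad j) y.
  move=> [Ti Bix0] [Tj Bjx0].
  have [u [Tu [Bux0 hu]]] := proj2 (proj2 hbase) i j x0 Ti Tj Bix0 Bjx0.
  exists u; split=> // y hy; split; apply: (tclosureS _ hy) => w [Xw [x [[_ Bux] nphi]]];
    have [Bix Bjx] := hu x Bux; by split=> //; exists x.
have [p hp] := hcpt hfam (fun t _ => tclosure_closed (bad t)) hne hfilt.
have [t0 [Tt0 Bt0x0]] := proj1 (proj2 hbase) x0 Xx0.
have [U [V [oU [oV [Ux0 [Vp hUV]]]]]] := hloc p (proj1 (hp t0 (conj Tt0 Bt0x0))).
have [t [Tt [Btx0 htU]]] := proj2 oU x0 Ux0.
have [s [Ts [Bsp hsV]]] := proj2 oV p Vp.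
have [w [Bsw [_ [x [[_ Btx] nphi]]]]] := (proj2 (hp t (conj Tt Btx0))) s Ts Bsp.
by apply: nphi; apply: hUV; [apply: htU | apply: hsV].
Qed.

End Topology.

Section TopologicalGroup.
Variables (M : expansion) (n m : nat).
Local Notation pt n := ('I_n -> car M).
Variables (G : pt n -> Prop) (mul : pt n -> pt n -> pt n) (e : pt n) (inv : pt n -> pt n)
  (T : pt m -> Prop) (B : pt m -> pt n -> Prop).
Hypothesis htg : def_top_group G mul e inv T B.

Lemma group_laws : is_group G mul e inv. Proof. by case: htg => [[]]. Qed.

Lemma group1 : G e. Proof. by case: group_laws. Qed.
Lemma groupM x y : G x -> G y -> G (mul x y).
Proof. by case: group_laws => _ [h _]; apply: h. Qed.
Lemma groupV x : G x -> G (inv x). Proof. by case: group_laws => _ [_ [h _]]; apply: h. Qed.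
Lemma mulgA x y z : G x -> G y -> G z -> mul x (mul y z) = mul (mul x y) z.
Proof. by case: group_laws => _ [_ [_ [h _]]]; apply: h. Qed.
Lemma mul1g x : G x -> mul e x = x. Proof. by case: group_laws => _ [_ [_ [_ [h _]]]] /h []. Qed.
Lemma mulg1 x : G x -> mul x e = x. Proof. by case: group_laws => _ [_ [_ [_ [h _]]]] /h []. Qed.
Lemma mulVg x : G x -> mul (inv x) x = e.
Proof. by case: group_laws => _ [_ [_ [_ [_ h]]]] /h []. Qed.
Lemma mulgV x : G x -> mul x (inv x) = e.
Proof. by case: group_laws => _ [_ [_ [_ [_ h]]]] /h []. Qed.

Lemma Def_group : Def G. Proof. by case: htg => [[_ []]]. Qed.
Lemma group_open_base : is_open_base G T B. Proof. by case: htg => [_ [[_ []]]]. Qed.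
Lemma Def_group_basic : Def (fun z : pt (m + n) => T (lpart z) /\ B (lpart z) (rpart z)).
Proof. by case: htg => [_ [[_ [[]]]]]. Qed.

Lemma continuous_mul x y W : G x -> G y -> topen G T B W -> W (mul x y) ->
  exists U V, topen G T B U /\ topen G T B V /\ U x /\ V y /\
    forall u v, U u -> V v -> W (mul u v).
Proof. by case: htg => [_ [_ [h _]]]; apply: h. Qed.

Lemma continuous_inv x W : G x -> topen G T B W -> W (inv x) ->
  exists U, topen G T B U /\ U x /\ forall u, U u -> W (inv u).
Proof. by case: htg => [_ [_ [_ h]]]; apply: h. Qed.

(* Only the graph of [mul] on G x G is definable, so definable formulas refer
   to products through [mul_graph] and are guarded by membership in G. *)
Definition mul_graph x y p := G x /\ G y /\ p = mul x y.

Lemma Def_mul_graph :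
  Def (fun w : pt (n + n + n) => mul_graph (lpart (lpart w)) (rpart (lpart w)) (rpart w)).
Proof. by case: htg => [[_ []]]. Qed.

Lemma mul_graphE (Y : pt n -> Prop) x y :
  G x -> G y -> (exists p, mul_graph x y p /\ Y p) = Y (mul x y).
Proof.
move=> Gx Gy; apply: propositional_extensionality.
by split=> [[p [[_ [_ ->]]]] //|Yxy]; exists (mul x y).
Qed.

Lemma mulg_conj_cancel a x b :
  G a -> G x -> G b -> mul (mul (mul a x) (inv a)) (mul a b) = mul (mul a x) b.
Proof.
move=> Ga Gx Gb; have Gax := groupM Ga Gx.
by rewrite -(mulgA Gax (groupV Ga) (groupM Ga Gb)) (mulgA (groupV Ga) Ga Gb) mulVg ?mul1g.
Qed.

Lemma discrete_of_open_unit : topen G T B (fun y => y = e) -> discrete G T B.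
Proof.
move=> oe x Gx.
have [U [V [oU [oV [Uix [Vx hUV]]]]]] := continuous_mul (groupV Gx) Gx oe (mulVg Gx).
split=> [_ -> //|_ ->]; have [s [Ts [Bsx hsV]]] := proj2 oV x Vx.
exists s; split=> //; split=> // y /hsV Vy; have Gy := proj1 oV y Vy.
by rewrite -(mul1g Gy) -(mulgV Gx) -(mulgA Gx (groupV Gx) Gy) (hUV _ _ Uix Vy) mulg1.
Qed.

Lemma conj_nbhd W a : topen G T B W -> W e -> G a ->
  exists U V, topen G T B U /\ topen G T B V /\ U e /\ V a /\
    forall x a', U x -> V a' -> W (mul (mul a' x) (inv a')).
Proof.
move=> oW We Ga; have Waa' : W (mul (mul a e) (inv a)) by rewrite mulg1 // mulgV.
have [U1 [V1 [oU1 [oV1 [U1a [V1a hUV1]]]]]] :=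
  continuous_mul (groupM Ga group1) (groupV Ga) oW Waa'.
have [U2 [V2 [oU2 [oV2 [U2a [V2e hUV2]]]]]] := continuous_mul Ga group1 oU1 U1a.
have [U3 [oU3 [U3a hU3]]] := continuous_inv Ga oV1 V1a.
exists V2, (fun a' => U2 a' /\ U3 a'); split=> //.
split; first exact: (topen_and group_open_base oU2 oU3).
by do 2 split=> //; move=> x a' V2x [U2a' U3a']; apply: hUV1; [apply: hUV2 | apply: hU3].
Qed.

Definition stab_at (Y : pt n -> Prop) x a :=
  forall b, G b -> (Y (mul a b) <-> Y (mul (mul a x) b)).
(* [stab Y] is the largest normal subgroup N of G with Y N = Y. *)
Definition stab (Y : pt n -> Prop) x := G x /\ forall a, G a -> stab_at Y x a.

Lemma stab_normal Y : normal_subgroup G mul e inv (stab Y).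
Proof.
split; first by move=> x [].
split; first by split=> [|a Ga b Gb]; [exact: group1 | rewrite mulg1].
split.
  move=> x y [Gx hx] [Gy hy]; split=> [|a Ga b Gb]; first exact: groupM.
  by rewrite (hx a Ga b Gb) (hy _ (groupM Ga Gx) b Gb) mulgA.
split.
  move=> x [Gx hx]; split=> [|a Ga b Gb]; first exact: groupV.
  have Gax' := groupM Ga (groupV Gx).
  by rewrite (hx _ Gax' b Gb) -(mulgA Ga (groupV Gx) Gx) mulVg ?mulg1.
move=> g x Gg [Gx hx]; have Ggx := groupM Gg Gx.
split=> [|a Ga b Gb]; first exact: groupM (groupV Gg).
have Gag := groupM Ga Gg; have Gg'b := groupM (groupV Gg) Gb.
have -> : mul a b = mul (mul a g) (mul (inv g) b).
  by rewrite -(mulgA Ga Gg Gg'b) (mulgA Gg (groupV Gg) Gb) mulgV ?mul1g.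
rewrite (hx _ Gag _ Gg'b) (mulgA (groupM Gag Gx) (groupV Gg) Gb).
by rewrite (mulgA Ga Ggx (groupV Gg)) (mulgA Ga Gg Gx).
Qed.

Lemma stab_full Y y z : (forall x, G x -> stab Y x) -> Y y -> G y -> G z -> Y z.
Proof.
move=> hfull Yy Gy Gz; have Gzy' := groupM Gz (groupV Gy).
have [_ /(_ e group1 y Gy)] := hfull _ Gzy'.
rewrite (mul1g Gy) (mul1g Gzy') -(mulgA Gz (groupV Gy) Gy) (mulVg Gy) (mulg1 Gz).
by case=> /(_ Yy).
Qed.

Lemma Def_stab_at Y : Def Y ->
  Def (fun w : pt (n + n) => G (lpart w) -> G (rpart w) -> stab_at Y (lpart w) (rpart w)).
Proof.
move=> hY.
have : Def (fun w : pt (n + n) => G (lpart w) -> G (rpart w) -> forall b, G b ->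
    ((exists p, mul_graph (rpart w) b p /\ Y p) <->
     exists q, mul_graph (rpart w) (lpart w) q /\ exists r, mul_graph q b r /\ Y r)).
  apply: Def_impl; first exact: (Def_reindex _ Def_group).
  apply: Def_impl; first exact: (Def_reindex _ Def_group).
  apply: Def_all => /=; apply: Def_impl; first exact: (Def_reindex _ Def_group).
  apply: Def_iff.
    apply: Def_ex => /=; apply: Def_and; first exact: (Def_reindex3 _ _ _ Def_mul_graph).
    exact: (Def_reindex _ hY).
  apply: Def_ex => /=; apply: Def_and; first exact: (Def_reindex3 _ _ _ Def_mul_graph).
  apply: Def_ex => /=; apply: Def_and; first exact: (Def_reindex3 _ _ _ Def_mul_graph).
  exact: (Def_reindex _ hY).
move/Def_ext; apply=> w; split=> h Gx Ga b Gb; have := h Gx Ga b Gb;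
  by rewrite (mul_graphE Y Ga Gb) (mul_graphE _ Ga Gx) (mul_graphE Y (groupM Ga Gx) Gb).
Qed.

Lemma Def_stab Y : Def Y -> Def (stab Y).
Proof.
move=> hY; have := Def_and Def_group
  (Def_all (P := fun x a => G x -> G a -> stab_at Y x a) (Def_stab_at hY)).
move/Def_ext; apply=> x; split=> -[Gx h]; split=> // a; first exact: h.
by move=> _; apply: h.
Qed.

Section ClopenSet.
Hypothesis hcpt : definably_compact G T B.
Variable Y : pt n -> Prop.
Hypotheses (hY : Def Y) (oY : topen G T B Y) (cY : tclosed G T B Y).

Lemma translate_clopen_nbhd :
  exists t, T t /\ B t e /\ forall x y, B t x -> G y -> (Y y <-> Y (mul x y)).
Proof.
pose phi x y := G x -> G y -> (Y y <-> Y (mul x y)).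
have hphi : Def (fun w : pt (n + n) => phi (lpart w) (rpart w)).
  have : Def (fun w : pt (n + n) => G (lpart w) -> G (rpart w) ->
      (Y (rpart w) <-> exists p, mul_graph (lpart w) (rpart w) p /\ Y p)).
    apply: Def_impl; first exact: (Def_reindex _ Def_group).
    apply: Def_impl; first exact: (Def_reindex _ Def_group).
    apply: Def_iff; first exact: (Def_reindex _ hY).
    apply: Def_ex => /=; apply: Def_and; first exact: (Def_reindex3 _ _ _ Def_mul_graph).
    exact: (Def_reindex _ hY).
  by move/Def_ext; apply=> w; split=> h Gx Gy; have := h Gx Gy; rewrite mul_graphE.
have near_unit y W : topen G T B W -> W y -> exists U V, topen G T B U /\ topen G T B V /\
    U e /\ V y /\ forall x y', U x -> V y' -> W y' /\ W (mul x y').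
  move=> oW Wy; have Gy := proj1 oW y Wy; have Wey : W (mul e y) by rewrite mul1g.
  have [U [V [oU [oV [Ue [Vy hUV]]]]]] := continuous_mul group1 Gy oW Wey.
  exists U, V; do 4 split=> //; move=> x y' Ux Vy'; split; last exact: hUV.
  by rewrite -(mul1g (proj1 oV _ Vy')); apply: hUV.
have [t [Tt [Bte ht]]] : exists t, T t /\ B t e /\ forall x y, B t x -> G y -> phi x y.
  apply: (tube_lemma group_open_base Def_group Def_group_basic hcpt group1 hphi) => y Gy.
  case: (classic (Y y)) => [Yy|nYy].
    have [U [V [oU [oV [Ue [Vy hUV]]]]]] := near_unit y Y oY Yy.
    by exists U, V; do 4 split=> //; move=> x y' Ux Vy' _ _; have [] := hUV x y' Ux Vy'.
  have [U [V [oU [oV [Ue [Vy hUV]]]]]] := near_unit y _ (proj2 cY) (conj Gy nYy).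
  by exists U, V; do 4 split=> //; move=> x y' Ux Vy' _ _; have [[_ ?] [_ ?]] := hUV x y' Ux Vy'.
exists t; do 2 split=> //; move=> x y Btx Gy; apply: ht => //.
exact: (proj1 group_open_base t x).
Qed.

Lemma stab_nbhd : exists t, T t /\ B t e /\ forall x, B t x -> stab Y x.
Proof.
have [t1 [Tt1 [Bt1e ht1]]] := translate_clopen_nbhd.
have [t [Tt [Bte ht]]] :
    exists t, T t /\ B t e /\ forall x a, B t x -> G a -> G x -> G a -> stab_at Y x a.
  apply: (tube_lemma group_open_base Def_group Def_group_basic hcpt group1 (Def_stab_at hY)).
  move=> a Ga; have [U [V [oU [oV [Ue [Va hUV]]]]]] :=
    conj_nbhd (topen_basic group_open_base Tt1) Bt1e Ga.
  exists U, V; do 4 split=> //; move=> x a' Ux Va' Gx Ga' b Gb.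
  by rewrite -(mulg_conj_cancel Ga' Gx Gb); apply: ht1 (hUV x a' Ux Va') (groupM Ga' Gb).
exists t; do 2 split=> //; move=> x Btx; have Gx := proj1 group_open_base t x Tt Btx.
by split=> // a Ga; apply: ht.
Qed.

End ClopenSet.
End TopologicalGroup.

Theorem theorem5p4 (M : expansion)
  (hloc : locally_o_minimal M) (hdc : definably_complete M)
  (n : nat) (G : ('I_n -> M) -> Prop) (mul : ('I_n -> M) -> ('I_n -> M) -> ('I_n -> M))
  (e : 'I_n -> M) (inv : ('I_n -> M) -> ('I_n -> M))
  (m : nat) (T : ('I_m -> M) -> Prop) (B : ('I_m -> M) -> ('I_n -> M) -> Prop)
  (htg : def_top_group G mul e inv T B)
  (hsimple : definably_simple G mul e inv)
  (hreg : regular G T B) (hhaus : hausdorff G T B)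
  (hcpt : definably_compact G T B) :
  discrete G T B \/ definably_connected G T B.
Proof.
have [|/not_definably_connected [Y [hY [oY [cY [[y Yy] [z [Gz nYz]]]]]]]] :=
  classic (definably_connected G T B); first by right.
left; apply: (discrete_of_open_unit htg).
have [t [Tt [Bte hstab]]] := stab_nbhd htg hcpt hY oY cY.
have [stab_e|stab_G] := hsimple _ (Def_stab htg hY) (stab_normal htg Y); last first.
  by case: nYz; apply: (stab_full htg stab_G Yy (proj1 oY _ Yy) Gz).
split=> [_ -> |_ ->]; first exact: (group1 htg).
by exists t; split=> //; split=> // x /hstab /stab_e.
Qed.
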